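(* There is no $\Sigma_1$-theory and no $\Sigma_2$-theory $\mathcal{T}$ which, with respect to the entire set of its sorts, is simultaneously not stably infinite, not stably finite, convex, and has the finite model property.
   Context: $\Sigma_1$ is the empty signature with one sort $\sigma$, and $\Sigma_2$ is the empty signature with two sorts $\sigma,\sigma_2$ (empty: no function symbols, only equality predicates, interpreted as identity). A $\Sigma$-interpretation is a structure (nonempty domain $\sigma^{\mathcal{A}}$ per sort) plus values for variables; a $\Sigma$-theory $\mathcal{T}$ is the class of all $\Sigma$-interpretations satisfying some set of closed formulas (the $\mathcal{T}$-interpretations); $\models_{\mathcal{T}}\varphi$ means every $\mathcal{T}$-interpretation satisfies $\varphi$. Let $S$ be a set of sorts. Convex w.r.t. $S$: for every conjunction of literals $\phi$ and variables $u_1,v_1,\dots,u_n,v_n$ of sorts in $S$, if $\models_{\mathcal{T}}\phi\to\bigvee_{i=1}^n u_i=v_i$ then $\models_{\mathcal{T}}\phi\to u_i=v_i$ for some $i$. Stably infinite w.r.t. $S$: every $\mathcal{T}$-satisfiable quantifier-free formula is satisfied by a $\mathcal{T}$-interpretation $\mathcal{A}$ with $\sigma^{\mathcal{A}}$ infinite for every $\sigma\in S$. Finite model property w.r.t. $S$: every $\mathcal{T}$-satisfiable quantifier-free formula is satisfied by a $\mathcal{T}$-interpretation with $\sigma^{\mathcal{A}}$ finite for every $\sigma\in S$. Stably finite w.r.t. $S$: for every quantifier-free $\phi$ and $\mathcal{T}$-interpretation $\mathcal{A}$ satisfying $\phi$, some $\mathcal{T}$-interpretation $\mathcal{B}$ satisfies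 $\phi$ with $|\sigma^{\mathcal{B}}|$ finite and $|\sigma^{\mathcal{B}}|\le|\sigma^{\mathcal{A}}|$ for all $\sigma\in S$. *)

(* Many-sorted first-order logic over an EMPTY signature (only equality),
   with a finite set of sorts given by an eqType S.
   Sigma_1 : S := unit (one sort);  Sigma_2 : S := bool (two sorts). *)
From mathcomp Require Import all_boot.
From Stdlib Require Import List.
Set Implicit Arguments. Unset Strict Implicit. Unset Printing Implicit Defensive.

Section FOL.
Variable S : eqType.

(* Variables are pairs (sort, index); the only terms are variables. *)
Inductive form : Type :=
| FEq  : S -> nat -> nat -> form
| FFalse : form
| FNot : form -> form
| FAnd : form -> form -> form
| FOr  : form -> form -> form
| FImp : form -> form -> form
| FAll : S -> nat -> form -> form
| FEx  : S -> nat -> form -> form.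

Fixpoint free (s : S) (x : nat) (p : form) : Prop :=
  match p with
  | FEq t a b => t = s /\ (a = x \/ b = x)
  | FFalse => False
  | FNot q => free s x q
  | FAnd q r | FOr q r | FImp q r => free s x q \/ free s x r
  | FAll t y q | FEx t y q => free s x q /\ ~ (t = s /\ y = x)
  end.

Definition closed (p : form) : Prop := forall s x, ~ free s x p.

Fixpoint qfree (p : form) : Prop :=
  match p with
  | FEq _ _ _ | FFalse => True
  | FNot q => qfree q
  | FAnd q r | FOr q r | FImp q r => qfree q /\ qfree r
  | FAll _ _ _ | FEx _ _ _ => False
  end.

Definition literal (p : form) : Prop :=
  match p with
  | FEq _ _ _ => True
  | FNot (FEq _ _ _) => True
  | _ => False
  end.

Inductive conj_lits : form -> Prop :=
| CL_lit p : literal p -> conj_lits p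
| CL_and p q : conj_lits p -> conj_lits q -> conj_lits (FAnd p q).

Fixpoint bigor_eq (l : list (S * nat * nat)) : form :=
  match l with
  | nil => FFalse
  | (s, a, b) :: nil => FEq s a b
  | (s, a, b) :: l' => FOr (FEq s a b) (bigor_eq l')
  end.

Record structure : Type := Struct {
  dom : S -> Type;
  dom_inh : forall s, inhabited (dom s) }.

Definition valuation (A : structure) := forall s : S, nat -> dom A s.

Definition upd (A : structure) (v : valuation A) (s : S) (x : nat) (a : dom A s)
  : valuation A :=
  fun s' y =>
    match @eqP S s s' with
    | ReflectT e => if y == x then eq_rect s (dom A) a s' e else v s' y
    | ReflectF _ => v s' y
    end.

Fixpoint sat (A : structure) (v : valuation A) (p : form) : Prop :=
  match p with
  | FEq s a b => v s a = v s b
  | FFalse => False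
  | FNot q => ~ sat v q
  | FAnd q r => sat v q /\ sat v r
  | FOr q r => sat v q \/ sat v r
  | FImp q r => sat v q -> sat v r
  | FAll s x q => forall a : dom A s, sat (upd v x a) q
  | FEx s x q => exists a : dom A s, sat (upd v x a) q
  end.

(* A theory is given by a set Ax of closed formulas; its T-structures are
   the structures satisfying every axiom. *)
Definition axioms_closed (Ax : form -> Prop) : Prop :=
  forall p, Ax p -> closed p.

Definition is_model (Ax : form -> Prop) (A : structure) : Prop :=
  forall p, Ax p -> forall v : valuation A, sat v p.

Definition T_valid (Ax : form -> Prop) (p : form) : Prop :=
  forall A, is_model Ax A -> forall v : valuation A, sat v p.

Definition T_satisfiable (Ax : form -> Prop) (p : form) : Prop :=
  exists A, is_model Ax A /\ exists v : valuation A, sat v p.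

Definition finite_type (T : Type) : Prop := exists l : list T, forall x, In x l.

(* All notions below are w.r.t. the entire set of sorts S. *)
Definition convex (Ax : form -> Prop) : Prop :=
  forall (phi : form) (l : list (S * nat * nat)),
    conj_lits phi -> l <> nil ->
    T_valid Ax (FImp phi (bigor_eq l)) ->
    exists s a b, In (s, a, b) l /\ T_valid Ax (FImp phi (FEq s a b)).

Definition stably_infinite (Ax : form -> Prop) : Prop :=
  forall phi, qfree phi -> T_satisfiable Ax phi ->
    exists A, is_model Ax A /\ (exists v : valuation A, sat v phi) /\
      forall s, ~ finite_type (dom A s).

Definition finite_model_property (Ax : form -> Prop) : Prop :=
  forall phi, qfree phi -> T_satisfiable Ax phi ->
    exists A, is_model Ax A /\ (exists v : valuation A, sat v phi) /\
      forall s, finite_type (dom A s).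

(* |dom B s| <= |dom A s| : there is an injection dom B s -> dom A s *)
Definition stably_finite (Ax : form -> Prop) : Prop :=
  forall phi, qfree phi ->
  forall A, is_model Ax A -> forall v : valuation A, sat v phi ->
    exists B, is_model Ax B /\ (exists w : valuation B, sat w phi) /\
      forall s, finite_type (dom B s) /\
        exists f : dom B s -> dom A s, forall x y, f x = f y -> x = y.

Definition bad_theory (Ax : form -> Prop) : Prop :=
  axioms_closed Ax /\ ~ stably_infinite Ax /\ ~ stably_finite Ax /\
  convex Ax /\ finite_model_property Ax.

End FOL.

From mathcomp Require Import all_boot zify.
From Stdlib Require Import List Classical ClassicalEpsilon.
Set Implicit Arguments. Unset Strict Implicit. Unset Printing Implicit Defensive.

(* In the empty signature a closed formula of quantifier depth d cannot
   distinguish two structures all of whose sorts have at least d elements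
   (back and forth).  So if a theory has models with all sorts arbitrarily
   large, the structure with every sort equal to nat is a model, and every
   satisfiable quantifier-free formula holds in it: the theory is stably
   infinite.

   Now let a quantifier-free phi hold in a model A that has no smaller finite
   model of phi.  A cannot be finite in all sorts, so some sort of A is
   infinite; with one sort this already gives arbitrarily large models.  With
   two sorts s and t, t infinite in A, the finite model property applied to
   phi plus "N distinct elements of sort t" gives a finite model in which s
   has two elements (otherwise it would be a smaller finite model of phi).
   Convexity then lets s grow one element at a time while t keeps N elements:
   were there no model with k + 1 elements in s, k distinct elements of sort s
   would force a further one to equal one of them, but no single one of them
   is forced. *)

Definition at_least (n : nat) (T : Type) : Prop :=
  exists f : nat -> T, {in gtn n &, injective f}.

Lemma at_least_le T m n : m <= n -> at_least n T -> at_least m T.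
Proof.
by move=> mn [f f_inj]; exists f => i j; rewrite !inE => lt_i lt_j; apply: f_inj; rewrite inE; lia.
Qed.

Lemma at_least_notin T (l : list T) :
  at_least (length l).+1 T -> exists b, ~ In b l.
Proof.
move=> [f f_inj]; apply: NNPP => all_in.
have f_in b : In b l by apply: NNPP => b_out; apply: all_in; exists b.
have nodup : NoDup (List.map f (List.seq 0 (length l).+1)).
  apply: NoDup_map_NoDup_ForallPairs; last exact: seq_NoDup.
  by move=> i j /in_seq lt_i /in_seq lt_j; apply: f_inj; rewrite inE; lia.
have := NoDup_incl_length nodup (fun b _ => f_in b).
by rewrite length_map length_seq; lia.
Qed.

Lemma infinite_at_least T : ~ finite_type T <-> forall n, at_least n T.
Proof.
split=> [infT|large [l l_full]]; last first.
  by have [b b_out] := @at_least_notin _ l (large _); apply: b_out (l_full b).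
have avoid (l : list T) : exists t, ~ In t l.
  apply: NNPP => l_full; apply: infT; exists l => t.
  by apply: NNPP => t_out; apply: l_full; exists t.
elim=> [|n [f f_inj]].
  by have [t _] := avoid nil; exists (fun _ => t).
have [t t_out] := avoid (List.map f (List.seq 0 n)).
have f_out i : i < n -> f i <> t.
  by move=> lt_in fi; apply: t_out; apply/in_map_iff; exists i; split => //; apply/in_seq; lia.
exists (fun i => if i == n then t else f i) => i j; rewrite !inE => lt_i lt_j.
case: eqVneq => [->|ne_i]; case: eqVneq => [->|ne_j] //.
- by move/esym/(f_out j); lia.
- by move/(f_out i); lia.
- by apply: f_inj; rewrite inE; lia.
Qed.

Fixpoint cindex T (l : list T) (x : T) : nat :=
  if l is y :: l' then
    if excluded_middle_informative (y = x) then 0 else (cindex l' x).+1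
  else 0.

Lemma cindex_lt T (l : list T) x : In x l -> cindex l x < length l.
Proof.
elim: l => [|y l IH] //= x_in; case: excluded_middle_informative => // ne_yx.
by case: x_in => [/ne_yx|/IH] //; lia.
Qed.

Lemma cindex_inj T (l : list T) x y :
  In x l -> In y l -> cindex l x = cindex l y -> x = y.
Proof.
elim: l => [|z l IH] //= x_in y_in.
case: excluded_middle_informative => [ezx|ne_zx];
  case: excluded_middle_informative => [ezy|ne_zy] //; first by subst.
by move=> [e]; apply: IH e; [case: x_in | case: y_in].
Qed.

Lemma finite_inj_infinite T U :
  finite_type T -> ~ finite_type U -> exists g : T -> U, injective g.
Proof.
move=> [l l_full] /infinite_at_least/(_ (length l)) [f f_inj].
exists (fun x => f (cindex l x)) => x y /f_inj e.
by apply: (cindex_inj (l_full x) (l_full y)); apply: e; apply: cindex_lt.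
Qed.

Lemma injective_belowS T n (f : nat -> T) :
  {in gtn n.+1 &, injective f} <->
  {in gtn n &, injective f} /\ (forall i, i < n -> f n <> f i).
Proof.
split=> [f_inj|[f_inj f_new] i j].
  split=> [i j|i lt_in]; last by move=> e; have := f_inj n i (ltnSn n) (leqW lt_in) e; lia.
  by rewrite !inE => lt_i lt_j; apply: f_inj; rewrite inE; lia.
rewrite !inE => lt_i lt_j; have [->|ne_i] := eqVneq i n; have [->|ne_j] := eqVneq j n => //.
- by move=> e; case: (f_new j _ e); lia.
- by move=> /esym e; case: (f_new i _ e); lia.
- by apply: f_inj; rewrite inE; lia.
Qed.

Section EmptySignature.
Variable S : eqType.
Implicit Types (A B : structure S) (p q : form S) (s t : S) (L : list (S * nat)).

Lemma upd_eq A (v : valuation A) s x (a : dom A s) y :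
  upd v x a s y = if y == x then a else v s y.
Proof.
rewrite /upd; case: (@eqP S s s) => [e|//].
by rewrite (eq_irrelevance e erefl).
Qed.

Lemma upd_neq A (v : valuation A) s x (a : dom A s) s' y :
  s' != s -> upd v x a s' y = v s' y.
Proof. by move=> ne; rewrite /upd; case: (@eqP S s s') => // e; rewrite e eqxx in ne. Qed.

Definition agree A B L (v : valuation A) (w : valuation B) : Prop :=
  forall s x y, In (s, x) L -> In (s, y) L -> (v s x = v s y <-> w s x = w s y).

Lemma agree_sym A B L (v : valuation A) (w : valuation B) :
  agree L v w -> agree L w v.
Proof. by move=> vw s x y x_in y_in; rewrite vw. Qed.

Lemma agree_cons A B L (v : valuation A) (w : valuation B) s x a b :
  agree L v w -> (forall y, In (s, y) L -> (v s y = a <-> w s y = b)) ->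
  agree ((s, x) :: L) (upd v x a) (upd w x b).
Proof.
move=> vw ab s1 x1 x2 in1 in2; have [e|ne_s] := eqVneq s1 s; last first.
  rewrite !upd_neq //; apply: vw.
    by case: in1 => // -[e]; rewrite e eqxx in ne_s.
  by case: in2 => // -[e]; rewrite e eqxx in ne_s.
subst s1; have in_tail z : In (s, z) ((s, x) :: L) -> z != x -> In (s, z) L.
  by move=> [[->]|//]; rewrite eqxx.
rewrite !upd_eq; case: eqVneq => [_|ne1]; case: eqVneq => [_|ne2] //.
- by have [ab1 ab2] := ab x2 (in_tail _ in2 ne2); split=> /esym ?; [rewrite ab1|rewrite ab2].
- by apply: ab; apply: in_tail.
- by apply: vw; apply: in_tail.
Qed.

Lemma agree_upd A B L (v : valuation A) (w : valuation B) s x (a : dom A s) :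
  agree L v w -> at_least (length L).+1 (dom B s) ->
  exists b : dom B s, agree ((s, x) :: L) (upd v x a) (upd w x b).
Proof.
move=> vw B_large; suff [b ab] : exists b, forall y, In (s, y) L -> (v s y = a <-> w s y = b).
  by exists b; apply: agree_cons vw ab.
have [[y0 [y0_in <-]]|a_new] := classic (exists y, In (s, y) L /\ v s y = a).
  by exists (w s y0) => y y_in; apply: vw.
have [b b_new] := @at_least_notin _ (List.map (fun sy => w s sy.2) L)
  ltac:(by rewrite length_map).
exists b => y y_in; split=> [e|e]; exfalso.
  by apply: a_new; exists y.
by apply: b_new; apply/in_map_iff; exists (s, y).
Qed.

Fixpoint qdepth p : nat :=
  match p with
  | FEq _ _ _ | FFalse => 0
  | FNot q => qdepth q
  | FAnd q r | FOr q r | FImp q r => qdepth q + qdepth r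
  | FAll _ _ q | FEx _ _ q => (qdepth q).+1
  end.

Definition large n A : Prop := forall s, at_least n (dom A s).

Lemma free_bind L t y p :
  (forall s x, free s x p /\ ~ (t = s /\ y = x) -> In (s, x) L) ->
  forall s x, free s x p -> In (s, x) ((t, y) :: L).
Proof.
move=> cover s x x_free; have [[<- <-]|ne] := classic (t = s /\ y = x); first by left.
by right; apply: cover.
Qed.

Lemma sat_agree_impl p : forall A B L (v : valuation A) (w : valuation B) n,
  (forall s x, free s x p -> In (s, x) L) -> agree L v w ->
  length L + qdepth p <= n -> large n A -> large n B -> sat v p -> sat w p.
Proof.
elim: p => [s a b | | q IH | q IHq r IHr | q IHq r IHr | q IHq r IHr | t y q IH | t y q IH]
  A B L v w n /= cover vw Ln A_large B_large.
- by apply: (proj1 (vw s a b _ _)); apply: cover; auto.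
- by [].
- move=> nvq wq; apply: nvq.
  exact: IH _ _ _ _ _ _ cover (agree_sym vw) Ln B_large A_large wq.
- move=> [vq vr]; split.
    by apply: (IHq _ _ _ _ _ _ _ vw _ A_large B_large vq) => [s x|]; auto; lia.
  by apply: (IHr _ _ _ _ _ _ _ vw _ A_large B_large vr) => [s x|]; auto; lia.
- move=> [vq|vr]; [left | right].
    by apply: (IHq _ _ _ _ _ _ _ vw _ A_large B_large vq) => [s x|]; auto; lia.
  by apply: (IHr _ _ _ _ _ _ _ vw _ A_large B_large vr) => [s x|]; auto; lia.
- move=> vqr wq.
  have vq : sat v q.
    by apply: (IHq _ _ _ _ _ _ _ (agree_sym vw) _ B_large A_large wq) => [s x|]; auto; lia.
  by apply: (IHr _ _ _ _ _ _ _ vw _ A_large B_large (vqr vq)) => [s x|]; auto; lia.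
- move=> vq b; have Ln' : (length L).+1 <= n by lia.
  have [a ab] := agree_upd y b (agree_sym vw) (at_least_le Ln' (A_large t)).
  apply: (IH _ _ _ _ _ _ _ (agree_sym ab) _ A_large B_large (vq a)); last by rewrite /=; lia.
  exact: free_bind.
- move=> [a va]; have Ln' : (length L).+1 <= n by lia.
  have [b ab] := agree_upd y a vw (at_least_le Ln' (B_large t)).
  exists b; apply: (IH _ _ _ _ _ _ _ ab _ A_large B_large va); last by rewrite /=; lia.
  exact: free_bind.
Qed.

Lemma sat_agree A B L (v : valuation A) (w : valuation B) n p :
  (forall s x, free s x p -> In (s, x) L) -> agree L v w ->
  length L + qdepth p <= n -> large n A -> large n B -> (sat v p <-> sat w p).
Proof.
move=> cover vw Ln A_large B_large; split.
  exact: sat_agree_impl _ _ _ _ _ _ _ cover vw Ln A_large B_large.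
exact: sat_agree_impl _ _ _ _ _ _ _ cover (agree_sym vw) Ln B_large A_large.
Qed.

Lemma sat_qfree_agree A B (v : valuation A) (w : valuation B) p : qfree p ->
  (forall s x y, free s x p -> free s y p -> (v s x = v s y <-> w s x = w s y)) ->
  (sat v p <-> sat w p).
Proof.
elim: p => [s a b | | q IH | q IHq r IHr | q IHq r IHr | q IHq r IHr | //= | //=] /=.
- by move=> _ vw; apply: vw; auto.
- by [].
- by move=> q_qf vw; rewrite IH.
all: by move=> [q_qf r_qf] vw; rewrite IHq ?IHr // => s x y *; apply: vw; auto.
Qed.

Fixpoint fresh p : nat :=
  match p with
  | FEq _ a b => (maxn a b).+1
  | FFalse => 0
  | FNot q | FAll _ _ q | FEx _ _ q => fresh q
  | FAnd q r | FOr q r | FImp q r => maxn (fresh q) (fresh r)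
  end.

Lemma free_fresh s x p : free s x p -> x < fresh p.
Proof.
elim: p => [t a b | | q IH | q IHq r IHr | q IHq r IHr | q IHq r IHr | t y q IH | t y q IH] /=;
  try by move=> [/IHq|/IHr]; lia.
- by move=> [_ [<-|<-]]; lia.
- by [].
- exact: IH.
- by move=> [/IH].
- by move=> [/IH].
Qed.

Definition nat_structure : structure S := @Struct S (fun _ => nat) (fun _ => inhabits 0).

Lemma nat_structure_large n : large n nat_structure.
Proof. by move=> s; exists id. Qed.

Definition arbitrarily_large_models (Ax : form S -> Prop) : Prop :=
  forall n, exists C, is_model Ax C /\ large n C.

Lemma nat_structure_model Ax :
  axioms_closed Ax -> arbitrarily_large_models Ax -> is_model Ax nat_structure.
Proof.
move=> Ax_closed Ax_large p p_ax w.
have [C [C_model C_large]] := Ax_large (qdepth p).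
pose vC : valuation C := fun s _ => epsilon (dom_inh C s) xpredT.
have no_free s x : free s x p -> In (s, x) nil by move/(Ax_closed p p_ax).
have agree_nil : agree nil vC w by move=> s x y [].
apply/(sat_agree no_free agree_nil (leqnn _) C_large (nat_structure_large _)).
exact: C_model.
Qed.

Lemma sat_nat_structure A (v : valuation A) phi :
  qfree phi -> sat v phi -> exists w : valuation nat_structure, sat w phi.
Proof.
pose image s := List.map (v s) (List.seq 0 (fresh phi)).
have in_image s x : free s x phi -> In (v s x) (image s).
  by move=> /free_fresh x_lt; apply/in_map_iff; exists x; split => //; apply/in_seq; lia.
move=> phi_qf phi_v; exists (fun s x => cindex (image s) (v s x)).
apply: (proj1 (sat_qfree_agree phi_qf _)) phi_v => s x y x_free y_free.
split=> [-> //|].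
exact: cindex_inj (in_image _ _ x_free) (in_image _ _ y_free).
Qed.

Lemma large_models_stably_infinite Ax :
  axioms_closed Ax -> arbitrarily_large_models Ax -> stably_infinite Ax.
Proof.
move=> Ax_closed Ax_large phi phi_qf [A [_ [v phi_v]]].
exists nat_structure; split; first exact: nat_structure_model.
split; first exact: sat_nat_structure phi_v.
by move=> s; apply/infinite_at_least => n; apply: nat_structure_large.
Qed.

Fixpoint differs s x b n : form S :=
  if n is n'.+1 then FAnd (differs s x b n') (FNot (FEq s x (b + n'))) else FEq s x x.

Fixpoint distinct s b n : form S :=
  if n is n'.+1 then FAnd (distinct s b n') (differs s (b + n') b n') else FEq s b b.

Lemma differs_lits s x b n : conj_lits (differs s x b n).
Proof. by elim: n => [|n IH] /=; [apply: CL_lit | apply: CL_and IH (CL_lit _)]. Qed.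

Lemma distinct_lits s b n : conj_lits (distinct s b n).
Proof. by elim: n => [|n IH] /=; [apply: CL_lit | apply: CL_and IH (differs_lits _ _ _ _)]. Qed.

Lemma conj_lits_qfree (p : form S) : conj_lits p -> qfree p.
Proof. by elim=> [{}p|] //; case: p => // -[]. Qed.

Lemma sat_differs A (v : valuation A) s x b n :
  sat v (differs s x b n) <-> forall i, i < n -> v s x <> v s (b + i).
Proof.
elim: n => [|n IH] /=; first by [].
rewrite IH; split=> [[ne_lt ne_n] i|ne]; last first.
  by split=> [i lt_in|]; apply: ne; lia.
by rewrite ltnS leq_eqVlt => /predU1P [->|/ne_lt].
Qed.

Lemma sat_distinct A (v : valuation A) s b n :
  sat v (distinct s b n) <-> {in gtn n &, injective (fun i => v s (b + i))}.
Proof.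
elim: n => [|n IH] /=.
  by split=> // _ i j; rewrite inE.
by rewrite injective_belowS IH sat_differs.
Qed.

Lemma dom_at_least0 A s : at_least 0 (dom A s).
Proof. by case: (dom_inh A s) => a; exists (fun _ => a) => i j; rewrite inE. Qed.

Lemma at_least_valuation A (n : S -> nat) :
  (forall s, at_least (n s) (dom A s)) ->
  exists v : valuation A, forall s, {in gtn (n s) &, injective (v s)}.
Proof.
move=> A_large; pose some_f s := let: ex_intro f _ := A_large s in inhabits f.
exists (fun s => epsilon (some_f s) (fun f => {in gtn (n s) &, injective f})) => s.
exact: epsilon_spec (some_f s) _ (A_large s).
Qed.

Lemma sat_bigor A (v : valuation A) l :
  sat v (bigor_eq l) <-> exists s a b, In (s, a, b) l /\ v s a = v s b.
Proof.
elim: l => [|[[s a] b] l IH]; first by split=> [|[s [a [b [[] _]]]]].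
case: l IH => [|e l] IH.
  rewrite /=; split=> [|[s' [a' [b' [[[<- <- <-]|[]] //]]]]].
  by exists s, a, b; split; first left.
rewrite [sat _ _]/= IH; split=> [[e_ab|[s' [a' [b' [e_in e_ab]]]]]|[s' [a' [b' [[e_eq|e_in] e_ab]]]]].
- by exists s, a, b; split; first left.
- by exists s', a', b'; split; first right.
- by left; case: e_eq e_ab => <- <- <-.
- by right; exists s', a', b'.
Qed.

Lemma fmp_large_sort Ax phi A (v : valuation A) t N :
  finite_model_property Ax -> qfree phi -> is_model Ax A -> sat v phi ->
  ~ finite_type (dom A t) ->
  exists B, is_model Ax B /\ (exists w : valuation B, sat w phi) /\
    (forall s, finite_type (dom B s)) /\ at_least N (dom B t).
Proof.
move=> fmp phi_qf A_model phi_v /infinite_at_least A_inf.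
pose m := fresh phi; pose psi := FAnd phi (distinct t m N).
have [F F_inj] := @at_least_valuation A (fun s => if s == t then N else 0)
  ltac:(by move=> s /=; case: (eqVneq s t) => [->|_]; [apply: A_inf | apply: dom_at_least0]).
pose v' : valuation A := fun s x => if m <= x then F s (x - m) else v s x.
have psi_v' : sat v' psi.
  split.
    apply: (proj1 (sat_qfree_agree phi_qf _)) phi_v => s x y /free_fresh x_lt /free_fresh y_lt.
    by rewrite /v' leqNgt x_lt leqNgt y_lt.
  apply/sat_distinct => i j; rewrite !inE /v' !leq_addr !addKn => lt_i lt_j.
  by apply: (F_inj t); rewrite eqxx inE.
have psi_qf : qfree psi by split=> //; apply/conj_lits_qfree/distinct_lits.
have [B [B_model [[w [phi_w /sat_distinct w_inj]] B_fin]]] := fmp psi psi_qf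
  (ex_intro _ A (conj A_model (ex_intro _ v' psi_v'))).
by exists B; do !split => //; [exists w | exists (fun i => w t (m + i))].
Qed.

Lemma collisions_valid Ax s t N k :
  ~ (exists C, is_model Ax C /\ at_least N (dom C t) /\ at_least k.+1 (dom C s)) ->
  T_valid Ax (FImp (FAnd (distinct t 0 N) (distinct s 0 k))
                   (bigor_eq (List.map (fun i => (s, k, i)) (List.seq 0 k)))).
Proof.
move=> no_model D D_model u [/sat_distinct u_t /sat_distinct u_s].
apply/sat_bigor; apply: NNPP => no_collision; apply: no_model.
exists D; split=> //; split; first by exists (u t).
exists (u s); apply/injective_belowS; split=> // i lt_ik e; apply: no_collision.
by exists s, k, i; split=> //; apply/in_map_iff; exists i; split=> //; apply/in_seq; lia.
Qed.

Lemma collision_not_valid Ax s t N k i : s != t -> i < k -> 1 < k ->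
  (exists C, is_model Ax C /\ at_least N (dom C t) /\ at_least k (dom C s)) ->
  ~ T_valid Ax (FImp (FAnd (distinct t 0 N) (distinct s 0 k)) (FEq s k i)).
Proof.
move=> ne_st lt_ik lt_1k [C [C_model [C_t C_s]]] valid.
have [F F_inj] := @at_least_valuation C (fun r => if r == s then k else if r == t then N else 0)
  ltac:(move=> r /=; case: (eqVneq r s) => [->//|_];
        case: (eqVneq r t) => [->//|_]; exact: dom_at_least0).
have F_s := F_inj s; rewrite /= eqxx in F_s.
have F_t := F_inj t; rewrite /= eq_sym (negbTE ne_st) eqxx in F_t.
pose j := if i == 0 then 1 else 0.
have: sat (upd F k (F s j)) (FEq s k i).
  apply: valid C_model _ _; split; apply/sat_distinct => x y; rewrite !inE => lt_x lt_y.
    by rewrite !upd_neq 1?eq_sym // !add0n; apply: F_t.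
  by rewrite !upd_eq !add0n !ifN_eq; [apply: F_s | lia | lia].
rewrite /= !upd_eq eqxx ifN_eq; last lia.
by move/F_s; rewrite /j !inE; case: (i) lt_ik => [|i'] /=; lia.
Qed.

Lemma convex_large_step Ax s t N k : convex Ax -> s != t -> 1 < k ->
  (exists C, is_model Ax C /\ at_least N (dom C t) /\ at_least k (dom C s)) ->
  exists C, is_model Ax C /\ at_least N (dom C t) /\ at_least k.+1 (dom C s).
Proof.
move=> cvx ne_st lt_1k C_ex; apply: NNPP => no_model.
have lits : conj_lits (FAnd (distinct t 0 N) (distinct s 0 k)).
  exact: CL_and (distinct_lits _ _ _) (distinct_lits _ _ _).
have collisions_nil : List.map (fun i => (s, k, i)) (List.seq 0 k) <> nil.
  by rewrite -(subnKC lt_1k).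
have [r [a [b [/in_map_iff [i [[<- <- <-] /in_seq i_range]] valid]]]] :=
  cvx _ _ lits collisions_nil (collisions_valid no_model).
have lt_ik : i < k by lia.
exact: collision_not_valid ne_st lt_ik lt_1k C_ex valid.
Qed.

Definition small_finite_model Ax (phi : form S) (A : structure S) : Prop :=
  exists B, is_model Ax B /\ (exists w : valuation B, sat w phi) /\
    forall s, finite_type (dom B s) /\ exists f : dom B s -> dom A s, injective f.

Lemma finite_small_model Ax phi A (v : valuation A) :
  is_model Ax A -> sat v phi -> (forall s, finite_type (dom A s)) ->
  small_finite_model Ax phi A.
Proof. by move=> A_model phi_v A_fin; exists A; do !split=> //; [exists v | exists id]. Qed.

End EmptySignature.

Lemma at_least2 T (x y : T) : x <> y -> at_least 2 T.
Proof.
move=> ne_xy; exists (fun i => if i == 0 then x else y) => i j; rewrite !inE.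
by case: i j => [|[|i]] [|[|j]] //= _ _ e; case: ne_xy; rewrite e.
Qed.

Lemma bool_eq_or_negb (r s : bool) : r = s \/ r = ~~ s.
Proof. by case: r; case: s; auto. Qed.

Lemma bool_two_points Ax phi A (v : valuation A) s N :
  finite_model_property Ax -> qfree phi -> is_model Ax A -> sat v phi ->
  ~ finite_type (dom A (~~ s)) -> ~ small_finite_model Ax phi A ->
  exists C, is_model Ax C /\ at_least N (dom C (~~ s)) /\ at_least 2 (dom C s).
Proof.
move=> fmp phi_qf A_model phi_v A_inf no_small.
have [B [B_model [phi_B [B_fin B_large]]]] := fmp_large_sort N fmp phi_qf A_model phi_v A_inf.
exists B; split=> //; split=> //; apply: NNPP => B_s_small; apply: no_small.
exists B; split=> //; split=> // r; split=> //; case: (bool_eq_or_negb r s) => ->.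
  have [a] := dom_inh A s; exists (fun _ => a) => x y _.
  by apply: NNPP => ne_xy; apply: B_s_small; apply: at_least2 ne_xy.
exact: finite_inj_infinite (B_fin _) A_inf.
Qed.

Lemma bool_large_models Ax phi A (v : valuation A) s :
  convex Ax -> finite_model_property Ax -> qfree phi -> is_model Ax A -> sat v phi ->
  ~ finite_type (dom A (~~ s)) -> ~ small_finite_model Ax phi A ->
  arbitrarily_large_models Ax.
Proof.
move=> cvx fmp phi_qf A_model phi_v A_inf no_small N.
have [C2 [C2_model [C2_ns C2_s]]] := bool_two_points N fmp phi_qf A_model phi_v A_inf no_small.
have grow k : exists C, is_model Ax C /\ at_least N (dom C (~~ s)) /\ at_least k (dom C s).
  elim: k => [|k IH]; first by exists C2; do !split=> //; apply: at_least_le C2_s.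
  have [le_k1|lt_1k] := leqP k 1; first by exists C2; do !split=> //; apply: at_least_le C2_s.
  by apply: convex_large_step cvx _ lt_1k IH; case: (s).
have [C [C_model [C_ns C_s]]] := grow N.
by exists C; split=> // r; case: (bool_eq_or_negb r s) => ->.
Qed.

Lemma unit_stably_finite (Ax : form unit -> Prop) :
  axioms_closed Ax -> ~ stably_infinite Ax -> stably_finite Ax.
Proof.
move=> Ax_closed not_si phi phi_qf A A_model v phi_v; apply: NNPP => no_small.
have [A_fin|A_inf] := classic (finite_type (dom A tt)).
  by apply: no_small; apply: finite_small_model A_model phi_v _ => -[].
apply: not_si; apply: large_models_stably_infinite Ax_closed _ => N.
by exists A; split=> // -[]; move/infinite_at_least: A_inf.
Qed.

Lemma bool_stably_finite (Ax : form bool -> Prop) :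
  axioms_closed Ax -> ~ stably_infinite Ax -> convex Ax -> finite_model_property Ax ->
  stably_finite Ax.
Proof.
move=> Ax_closed not_si cvx fmp phi phi_qf A A_model v phi_v; apply: NNPP => no_small.
have [[r A_inf]|A_fin] := classic (exists r, ~ finite_type (dom A r)).
  apply: not_si; apply: large_models_stably_infinite Ax_closed _.
  by apply: (bool_large_models (s := ~~ r)) cvx fmp phi_qf A_model phi_v _ no_small; rewrite negbK.
apply: no_small; apply: finite_small_model A_model phi_v _ => r.
by apply: NNPP => r_inf; apply: A_fin; exists r.
Qed.

Theorem theorem7 :
  (~ exists Ax : form unit -> Prop, bad_theory Ax) /\
  (~ exists Ax : form bool -> Prop, bad_theory Ax).
Proof.
split=> -[Ax [Ax_closed [not_si [not_sf [cvx fmp]]]]]; apply: not_sf.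
  exact: unit_stably_finite.
exact: bool_stably_finite.
Qed.
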